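(* For every $\bar x\in\mathcal{X}$, $$\operatorname{proj}_\theta(\widehat{\mathrm{SRI}}(\bar x))=\Big\{\theta\in\mathbb{R}^{V_+}_{\ge0}:\sum_{v\in V_+:w_v>0}\phi_v(\alpha,\beta)\theta_v\ge\sum_{\xi\in[N]}\sum_{\emptyset\ne S\subseteq V_+}\alpha^\xi_S\bar x(E(S))+\nu(\alpha,\beta)\ \ \forall(\alpha,\beta)\in\mathcal{A}\Big\}.$$ Consequently, $\mathcal{P}$ equals the set of $(x,\theta)\in\mathcal{X}\times\mathbb{R}^{V_+}_{\ge0}$ satisfying $\sum_{v:w_v>0}\phi_v(\alpha,\beta)\theta_v\ge\sum_\xi\sum_S\alpha^\xi_Sx(E(S))+\nu(\alpha,\beta)$ for all $(\alpha,\beta)\in\mathcal{A}$.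
   Context: $G=(V,E)$ complete undirected graph, $V=\{0\}\cup V_+$ ($V_+$ customers); capacity $C>0$; scenarios $\xi\in[N]$ with demands $d^\xi\in\mathbb{Q}^{V_+}_{\ge0}$ ($d^\xi(v)\le C$) and probabilities $p_\xi\ge0$, $\sum_\xi p_\xi=1$. $f(S)=\sum_{i\in S}f(i)$; $k_\xi(S)=\lceil d^\xi(S)/C\rceil$; $\bar d=\sum_\xi p_\xi d^\xi$; $E(S)$: edges with both ends in $S$; $\delta(S)$: edges with exactly one end in $S$. $\mathcal{X}$ is one of $\mathcal{X}_{\mathrm{sub}}=\{x\in[0,2]^E: x(\delta(v))=2\ \forall v\in V_+,\ x(E(S))\le|S|-1\ \forall\emptyset\ne S\subseteq V_+\}$ or $\mathcal{X}_{\mathrm{cvrp}}=\mathcal{X}_{\mathrm{sub}}\cap\{x:x(\delta(0))=2k,\ x(E(S))\le|S|-\lceil\bar d(S)/C\rceil\}$. Fixed $w\in\mathbb{Q}^{V_+}_{\ge0}$, $b\in\mathbb{Z}^{V_+}_{\ge0}$; $y\in\mathbb{R}^{[N]\times V_+}$ has entries $y^\xi_v$; $[\mathbf 0,b]^N=\{y:0\le y^\xi_v\le b_v\}$. For $\bar x\in\mathcal{X}$, $\widehat{\mathrm{SRI}}(\bar x)$ is the set of $(\theta,y)\in\mathbb{R}^{V_+}_{\ge0}\times[\mathbf 0,b]^N$ with $y^\xi(S)\ge k_\xi(S)+\bar x(E(S))-|S|$ for all $\emptyset\ne S\subseteq V_+$, $\xi\in[N]$, and $\theta_v\ge\sum_\xi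 p_\xi w_vy^\xi_v$ for all $v$; $\operatorname{proj}_\theta$ is projection onto $\theta$; $\mathcal{P}=\{(x,\theta):x\in\mathcal{X},\theta\in\operatorname{proj}_\theta(\widehat{\mathrm{SRI}}(x))\}$. Multipliers $\alpha=(\alpha^\xi_S)_{\xi,\emptyset\ne S\subseteq V_+}$, $\beta=(\beta^\xi_v)_{\xi,v}$. $\nu(\alpha,\beta)=\sum_\xi\sum_S\alpha^\xi_S(k_\xi(S)-|S|)+\sum_\xi\sum_v\beta^\xi_vb_v$. For $w_v>0$, $\phi_v(\alpha,\beta)=\big(\max_{\xi}\frac{\beta^\xi_v+\sum_{S\ni v}\alpha^\xi_S}{p_\xi w_v}\big)^+$ with $(a)^+=\max\{a,0\}$. $\mathcal{A}$ is the set of $(\alpha,\beta)$ with $\alpha\ge0$, $\beta\le0$, and $\beta^\xi_v+\sum_{S\ni v}\alpha^\xi_S\le0$ for all $\xi$ and all $v$ with $w_v=0$. *)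

(* Customers V_+ = 'I_n, vertex set V = option 'I_n with the
   depot 0 represented by None and customer v by Some v. *)
From HB Require Import structures.
From mathcomp Require Import all_boot all_order all_algebra.
From mathcomp Require Import reals.
Set Implicit Arguments. Unset Strict Implicit. Unset Printing Implicit Defensive.
Import Order.TTheory GRing.Theory Num.Theory.
Local Open Scope ring_scope.

Definition edge (n : nat) := {e : {set option 'I_n} | #|e| == 2%N}.

Section Defs.
Variable R : realType.
Variables n N : nat.

Definition xE (x : edge n -> R) (S : {set 'I_n}) : R :=
  \sum_(e : edge n | val e \subset Some @: S) x e.

Definition xdelta (x : edge n -> R) (T : {set option 'I_n}) : R :=
  \sum_(e : edge n | #|val e :&: T| == 1%N) x e.

Variables (d : 'I_N -> 'I_n -> rat) (p : 'I_N -> rat) (C : rat)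
          (w : 'I_n -> rat) (b : 'I_n -> nat).

Definition kxi (xi : 'I_N) (S : {set 'I_n}) : int :=
  Num.ceil ((\sum_(v in S) d xi v) / C).

Definition dbar (S : {set 'I_n}) : rat :=
  \sum_(xi < N) p xi * (\sum_(v in S) d xi v).

Definition X_sub (x : edge n -> R) : Prop :=
  [/\ forall e, 0 <= x e <= 2,
      forall v : 'I_n, xdelta x [set Some v] = 2 &
      forall S : {set 'I_n}, S != set0 -> xE x S <= #|S|%:R - 1].

(* k is the (fixed) number of vehicles *)
Definition X_cvrp (k : nat) (x : edge n -> R) : Prop :=
  [/\ X_sub x,
      xdelta x [set None] = 2 * k%:R &
      forall S : {set 'I_n}, S != set0 ->
        xE x S <= #|S|%:R - (Num.ceil (dbar S / C))%:~R].

Definition Xset (cvrp : option nat) (x : edge n -> R) : Prop :=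
  match cvrp with None => X_sub x | Some k => X_cvrp k x end.

Definition SRIhat (x : edge n -> R) (theta : 'I_n -> R) (y : 'I_N -> 'I_n -> R)
  : Prop :=
  [/\ forall v, 0 <= theta v,
      forall xi v, 0 <= y xi v <= (b v)%:R,
      forall xi (S : {set 'I_n}), S != set0 ->
        (kxi xi S)%:~R + xE x S - #|S|%:R <= \sum_(v in S) y xi v &
      forall v, \sum_(xi < N) ratr (p xi) * ratr (w v) * y xi v <= theta v].

Definition projSRI (x : edge n -> R) (theta : 'I_n -> R) : Prop :=
  exists y, SRIhat x theta y.

Definition Pset (cvrp : option nat) (x : edge n -> R) (theta : 'I_n -> R) : Prop :=
  Xset cvrp x /\ projSRI x theta.

Definition nu (alpha : 'I_N -> {set 'I_n} -> R) (beta : 'I_N -> 'I_n -> R) : R :=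
  \sum_(xi < N) \sum_(S : {set 'I_n} | S != set0)
      alpha xi S * ((kxi xi S)%:~R - #|S|%:R)
  + \sum_(xi < N) \sum_(v < n) beta xi v * (b v)%:R.

Definition posp (a : R) : R := Num.max a 0.

(* φ_v(α,β) = (max_ξ (β^ξ_v + Σ_{S∋v} α^ξ_S)/(p_ξ w_v))^+   (used for w_v > 0).
   Since N ≥ 1 (probabilities sum to 1), folding max with initial value 0
   followed by (.)^+ is exactly (max_ξ …)^+. *)
Definition phi (alpha : 'I_N -> {set 'I_n} -> R) (beta : 'I_N -> 'I_n -> R)
  (v : 'I_n) : R :=
  posp (\big[Num.max/0]_(xi < N)
          ((beta xi v + \sum_(S : {set 'I_n} | v \in S) alpha xi S)
             / (ratr (p xi) * ratr (w v)))).

Definition Aset (alpha : 'I_N -> {set 'I_n} -> R) (beta : 'I_N -> 'I_n -> R)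
  : Prop :=
  [/\ forall xi (S : {set 'I_n}), S != set0 -> 0 <= alpha xi S,
      forall xi v, beta xi v <= 0 &
      forall xi v, w v = 0 ->
        beta xi v + \sum_(S : {set 'I_n} | v \in S) alpha xi S <= 0].

Definition ineq (x : edge n -> R) (theta : 'I_n -> R)
  (alpha : 'I_N -> {set 'I_n} -> R) (beta : 'I_N -> 'I_n -> R) : Prop :=
  \sum_(xi < N) \sum_(S : {set 'I_n} | S != set0) alpha xi S * xE x S
    + nu alpha beta
  <= \sum_(v < n | 0 < w v) phi alpha beta v * theta v.

End Defs.

From HB Require Import structures.
From mathcomp Require Import all_boot all_order all_algebra.
From mathcomp Require Import reals.
From mathcomp Require Import ring lra.
Import Order.TTheory GRing.Theory Num.Theory.
Local Open Scope ring_scope.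

(* SRI-hat(x) is a finite system of linear inequalities in y in which theta and
   x only enter the right-hand sides.  By Farkas' lemma (proved below by
   Fourier-Motzkin elimination), theta lies in the projection iff every
   nonnegative combination of the rows that cancels y has a nonnegative
   right-hand side.  Write the multipliers of such a combination as alpha on
   the covering rows, -beta on the bounds y <= b and lambda_v on the rows
   bounding theta_v.  Cancelling y^xi_v says
   beta^xi_v + sum_{S ni v} alpha^xi_S <= lambda_v p_xi w_v, the multiplier of
   y >= 0 absorbing the slack: for w_v = 0 this is the condition defining A,
   for w_v > 0 it says lambda_v >= phi_v(alpha, beta).  The right-hand side of
   the combination is sum_v lambda_v theta_v - sum alpha x(E(S)) - nu, which
   the inequality for (alpha, beta) makes nonnegative.  Conversely, summing
   the constraints of SRI-hat with the multipliers alpha, beta and phi yields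
   each inequality. *)

Lemma sum_kronecker (R : pzSemiRingType) (I : finType) (i : I) (F : I -> R) :
  \sum_k (k == i)%:R * F k = F i.
Proof.
rewrite (bigD1 i) //= eqxx mul1r big1 ?addr0 // => k /negbTE ->; exact: mul0r.
Qed.

Lemma sum_pair (R : nmodType) (I J : finType) (F : I * J -> R) :
  \sum_p F p = \sum_i \sum_j F (i, j).
Proof. by rewrite pair_bigA; apply: eq_bigr => -[]. Qed.

Lemma sum_nonempty_subsets_exchange (R : pzSemiRingType) (T : finType)
    (alpha : {set T} -> R) (y : T -> R) :
  \sum_(S : {set T} | S != set0) alpha S * \sum_(v in S) y v =
  \sum_v (\sum_(S : {set T} | v \in S) alpha S) * y v.
Proof.
under [RHS]eq_bigr => v _ do rewrite mulr_suml.
rewrite (exchange_big_dep (fun S : {set T} => S != set0)) /= => [|v S _ vS].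
  by apply: eq_bigr => S _; rewrite mulr_sumr.
by apply/set0Pn; exists v.
Qed.

Lemma exists_between (R : realDomainType) (I : finType) (P Q : pred I)
    (f g : I -> R) :
  (forall i j, P i -> Q j -> f i <= g j) ->
  exists y, (forall i, P i -> f i <= y) /\ (forall j, Q j -> y <= g j).
Proof.
move=> fg.
case: (pickP P) => [i0 Pi0|P0].
  exists (\big[Num.max/f i0]_(i | P i) f i); split.
    by move=> i Pi; rewrite (bigD1 i) //= le_max lexx.
  move=> j Qj; elim/big_ind: _ => [|x y hx hy|i Pi]; first exact: fg.
    by rewrite ge_max hx hy.
  exact: fg.
case: (pickP Q) => [j0 Qj0|Q0].
  exists (\big[Num.min/g j0]_(j | Q j) g j); split => [i|j Qj].
    by rewrite P0.
  by rewrite (bigD1 j) //= ge_min lexx.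
by exists 0; split => i; rewrite ?P0 ?Q0.
Qed.

Section Farkas.
Context {R : realFieldType}.

Definition feasible {I J : finType} (A : I -> J -> R) (c : I -> R) : Prop :=
  exists y : J -> R, forall i, \sum_j A i j * y j <= c i.

Definition no_infeasibility_certificate {I J : finType} (A : I -> J -> R)
    (c : I -> R) : Prop :=
  forall l : I -> R, (forall i, 0 <= l i) ->
    (forall j, \sum_i l i * A i j = 0) -> 0 <= \sum_i l i * c i.

Section FourierMotzkin.
Variables (I : finType) (m : nat) (A : I -> 'I_m.+1 -> R) (c : I -> R).

Local Notation a i := (A i ord0).

(* Fourier-Motzkin: keep every row i with [a i = 0] and, for every pair
   [a i > 0 > a j], add row i times [- a j] to row j times [a i], so that the
   first variable cancels. *)
Definition fm_weight (r : I + I * I) (k : I) : R :=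
  match r with
  | inl i => (a i == 0)%:R * (k == i)%:R
  | inr (i, j) =>
      ((0 < a i) && (a j < 0))%:R * ((k == i)%:R * - a j + (k == j)%:R * a i)
  end.

Definition fm_matrix (r : I + I * I) (j : 'I_m) : R :=
  \sum_k fm_weight r k * A k (lift ord0 j).

Definition fm_rhs (r : I + I * I) : R := \sum_k fm_weight r k * c k.

Lemma fm_weight_ge0 r k : 0 <= fm_weight r k.
Proof.
case: r => [i|[i j]] /=; first by rewrite mulr_ge0 ?ler0n.
have [/andP[ai_gt0 aj_lt0]|_] := boolP ((0 < a i) && (a j < 0)); last first.
  by rewrite mul0r.
by rewrite mul1r addr_ge0 // mulr_ge0 ?ler0n ?oppr_ge0 ?ltW.
Qed.

Lemma sum_fm_weight r (F : I -> R) :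
  \sum_k fm_weight r k * F k =
  match r with
  | inl i => (a i == 0)%:R * F i
  | inr (i, j) => ((0 < a i) && (a j < 0))%:R * (- a j * F i + a i * F j)
  end.
Proof.
case: r => [i|[i j]] /=; under eq_bigr => k _ do rewrite -mulrA.
  by rewrite -mulr_sumr sum_kronecker.
under eq_bigr => k _ do rewrite mulrDl -!mulrA.
by rewrite -mulr_sumr big_split /= !sum_kronecker.
Qed.

Lemma fm_weight_eliminates r : \sum_k fm_weight r k * a k = 0.
Proof.
rewrite sum_fm_weight; case: r => [i|[i j]].
  by have [->|] := eqVneq (a i) 0; rewrite ?mulr0 ?mul0r.
by rewrite mulNr [a i * a j]mulrC addNr mulr0.
Qed.

Lemma fm_no_infeasibility_certificate :
  no_infeasibility_certificate A c ->
  no_infeasibility_certificate fm_matrix fm_rhs.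
Proof.
move=> Ac l' l'_ge0 l'A.
pose l k := \sum_r l' r * fm_weight r k.
have lE F : \sum_k l k * F k = \sum_r l' r * \sum_k fm_weight r k * F k.
  under eq_bigr => k _ do rewrite mulr_suml.
  rewrite exchange_big /=; apply: eq_bigr => r _.
  by rewrite mulr_sumr; apply: eq_bigr => k _; rewrite mulrA.
rewrite -lE; apply: Ac => [k|j].
  by apply: sumr_ge0 => r _; rewrite mulr_ge0 ?fm_weight_ge0.
rewrite lE; have [j' ->|->] := unliftP ord0 j; first exact: l'A.
by rewrite big1 // => r _; rewrite fm_weight_eliminates mulr0.
Qed.

Lemma fm_feasible_lift (y' : 'I_m -> R) :
  (forall r, \sum_j fm_matrix r j * y' j <= fm_rhs r) -> feasible A c.
Proof.
move=> y'_sol.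
pose e i := c i - \sum_j A i (lift ord0 j) * y' j.
have e_comb r : 0 <= \sum_k fm_weight r k * e k.
  rewrite /e; under eq_bigr => k _ do rewrite mulrBr mulr_sumr.
  rewrite sumrB subr_ge0 exchange_big /=.
  under eq_bigr => j _ do
    (under eq_bigr => k _ do rewrite mulrA; rewrite -mulr_suml).
  exact: y'_sol.
have e_ge0 i : a i = 0 -> 0 <= e i.
  move=> ai0; have := e_comb (inl i).
  by rewrite sum_fm_weight /= ai0 eqxx mul1r.
have e_pair i j : 0 < a i -> a j < 0 -> 0 <= - a j * e i + a i * e j.
  move=> ai aj; have := e_comb (inr (i, j)).
  by rewrite sum_fm_weight /= ai aj mul1r.
have e_ratio_le j i : a j < 0 -> 0 < a i -> e j / a j <= e i / a i.
  move=> aj ai; have := e_pair i j ai aj.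
  by rewrite ler_ndivrMr // mulrAC ler_pdivrMr //; nra.
have [y0 [y0_lo y0_hi]] :=
  @exists_between _ _ (fun j => a j < 0) (fun i => 0 < a i) _ _ e_ratio_le.
have y0_sol i : a i * y0 <= e i.
  have [ai|ai|ai] := ltrgtP (a i) 0; last by rewrite ai mul0r e_ge0.
    by have := y0_lo i ai; rewrite /= ler_ndivrMr // mulrC.
  by have := y0_hi i ai; rewrite /= ler_pdivlMr // mulrC.
exists (fun j => if unlift ord0 j is Some j' then y' j' else y0) => i.
rewrite big_ord_recl /= unlift_none.
under eq_bigr => j _ do rewrite liftK.
by have := y0_sol i; rewrite /e; lra.
Qed.

End FourierMotzkin.

Lemma farkas_ord (m : nat) (I : finType) (A : I -> 'I_m -> R) (c : I -> R) :
  no_infeasibility_certificate A c -> feasible A c.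
Proof.
elim: m I A c => [|m IHm] I A c Ac.
  exists (fun _ => 0) => i; rewrite big_ord0.
  have := Ac (fun k => (k == i)%:R); rewrite sum_kronecker; apply => [k|[]//].
  by rewrite ler0n.
by move: Ac => /fm_no_infeasibility_certificate /IHm [y' /fm_feasible_lift].
Qed.

Lemma farkas (I J : finType) (A : I -> J -> R) (c : I -> R) :
  no_infeasibility_certificate A c -> feasible A c.
Proof.
move=> Ac.
have /farkas_ord[y' y'_sol] :
    no_infeasibility_certificate (fun i (k : 'I_#|J|) => A i (enum_val k)) c.
  move=> l l_ge0 lA; apply: (Ac l l_ge0) => j.
  by rewrite -[j]enum_rankK; apply: lA.
exists (fun j => y' (enum_rank j)) => i.
rewrite (reindex (@enum_val J predT)) /=; last exact: onW_bij (enum_val_bij J).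
by under eq_bigr => k _ do rewrite enum_valK.
Qed.

End Farkas.

Section SRIProjection.
Variable R : realType.
Variables (n N : nat) (d : 'I_N -> 'I_n -> rat) (p : 'I_N -> rat) (C : rat)
          (w : 'I_n -> rat) (b : 'I_n -> nat).
Hypothesis p_gt0 : forall xi, 0 < p xi.
Hypothesis w_ge0 : forall v, 0 <= w v.

Local Notation pw xi v := (ratr (p xi) * ratr (w v) : R).

Implicit Types (alpha : 'I_N -> {set 'I_n} -> R) (beta : 'I_N -> 'I_n -> R).
Implicit Types (x : edge n -> R) (theta : 'I_n -> R) (y : 'I_N -> 'I_n -> R).

Definition dual_load alpha beta xi v : R :=
  beta xi v + \sum_(S : {set 'I_n} | v \in S) alpha xi S.

Lemma pw_gt0 xi v : 0 < w v -> 0 < pw xi v.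
Proof. by move=> w_gt0; rewrite mulr_gt0 // ltr0q. Qed.

Lemma phi_ge0 alpha beta v : 0 <= phi p w alpha beta v.
Proof. by rewrite /phi /posp le_max lexx orbT. Qed.

Lemma dual_load_le_phi alpha beta xi v :
  0 < w v -> dual_load alpha beta xi v <= phi p w alpha beta v * pw xi v.
Proof.
move=> /(pw_gt0 xi) pw_pos; rewrite -ler_pdivrMr // /phi /posp le_max.
by rewrite (bigD1 xi) //= le_max lexx.
Qed.

Lemma phi_le alpha beta v (lam : R) : 0 <= lam -> 0 < w v ->
  (forall xi, dual_load alpha beta xi v <= lam * pw xi v) ->
  phi p w alpha beta v <= lam.
Proof.
move=> lam_ge0 w_gt0 load_le; rewrite /phi /posp ge_max lam_ge0 andbT.
elim/big_ind: _ => [//|s t s_le t_le|xi _]; first by rewrite ge_max s_le t_le.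
by rewrite ler_pdivrMr ?pw_gt0 ?load_le.
Qed.

Lemma sum_dual_load_le x theta y alpha beta v :
  SRIhat d p C w b x theta y -> Aset w alpha beta ->
  \sum_xi dual_load alpha beta xi v * y xi v <=
  (if 0 < w v then phi p w alpha beta v * theta v else 0).
Proof.
move=> [_ y_box _ y_theta] [_ _ load_le0].
have y_ge0 xi : 0 <= y xi v by case/andP: (y_box xi v).
case: ifP => [w_gt0|w_le0].
  apply: le_trans (ler_wpM2l (phi_ge0 _ _ _) (y_theta v)).
  rewrite mulr_sumr; apply: ler_sum => xi _; rewrite mulrA.
  by apply: ler_wpM2r; rewrite ?dual_load_le_phi.
have w0 : w v = 0 by apply/eqP; rewrite eq_le w_ge0 leNgt w_le0.
apply: sumr_le0 => xi _; apply: mulr_le0_ge0 => //.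
by rewrite /dual_load load_le0.
Qed.

Lemma SRIhat_ineq x theta y alpha beta :
  SRIhat d p C w b x theta y -> Aset w alpha beta ->
  ineq d p C w b x theta alpha beta.
Proof.
move=> sri A_ab; have [_ y_box y_cover _] := sri.
have [alpha_ge0 beta_le0 _] := A_ab.
have combined : \sum_xi \sum_(S : {set 'I_n} | S != set0) alpha xi S * xE x S
    + nu d C b alpha beta <= \sum_xi \sum_v dual_load alpha beta xi v * y xi v.
  rewrite /nu addrA -!big_split /=; apply: ler_sum => xi _.
  under [X in _ <= X]eq_bigr => v _ do rewrite mulrDl.
  rewrite big_split /= -sum_nonempty_subsets_exchange -big_split /=.
  rewrite [X in _ <= X]addrC.
  apply: lerD; [apply: ler_sum => S S_nz|apply: ler_sum => v _].
    rewrite -mulrDr; apply: ler_wpM2l; first exact: alpha_ge0.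
    by have := y_cover xi S S_nz; lra.
  by apply: ler_wnM2l => //; case/andP: (y_box xi v).
apply: (le_trans combined); rewrite exchange_big /= [X in _ <= X]big_mkcond /=.
by apply: ler_sum => v _; apply: (sum_dual_load_le _ _ _ _ _ v sri A_ab).
Qed.

Definition sri_var := ('I_N * 'I_n)%type.

(* Rows, in order: [-y <= 0], [y <= b], the covering constraints written as
   [- y^xi(S) <= - (k_xi(S) + x(E(S)) - |S|)], and the rows bounding theta. *)
Definition sri_row := ((sri_var + sri_var) + (('I_N * {set 'I_n}) + 'I_n))%type.

Definition sri_matrix (r : sri_row) (j : sri_var) : R :=
  match r with
  | inl (inl k) => - (j == k)%:R
  | inl (inr k) => (j == k)%:R
  | inr (inl (xi, T)) => - ((j.1 == xi) && (j.2 \in T))%:R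
  | inr (inr v) => (j.2 == v)%:R * pw j.1 v
  end.

Definition sri_rhs x theta (r : sri_row) : R :=
  match r with
  | inl (inl _) => 0
  | inl (inr k) => (b k.2)%:R
  | inr (inl (xi, T)) =>
      if T != set0 then - ((kxi d C xi T)%:~R + xE x T - #|T|%:R) else 0
  | inr (inr v) => theta v
  end.

Lemma sum_sri_matrix r (z : sri_var -> R) :
  \sum_j sri_matrix r j * z j =
  match r with
  | inl (inl k) => - z k
  | inl (inr k) => z k
  | inr (inl (xi, T)) => - \sum_(v in T) z (xi, v)
  | inr (inr v) => \sum_xi pw xi v * z (xi, v)
  end.
Proof.
case: r => [[k|k]|[[xi T]|v]] /=.
- by under eq_bigr => j _ do rewrite mulNr; rewrite sumrN sum_kronecker.
- exact: sum_kronecker.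
- rewrite sum_pair /= (bigD1 xi) //= [X in _ + X]big1 => [|xi' /negbTE xi'_neq].
    rewrite addr0 -sumrN [RHS]big_mkcond /=; apply: eq_bigr => v _.
    by rewrite eqxx; case: (v \in T); rewrite ?mulN1r ?oppr0 ?mul0r.
  by apply: big1 => v _; rewrite xi'_neq mulr0n oppr0 mul0r.
- rewrite sum_pair /=; apply: eq_bigr => xi _.
  under eq_bigr => k _ do rewrite mulrAC.
  by rewrite -mulr_suml sum_kronecker mulrC.
Qed.

Lemma SRIhat_of_feasible x theta (z : sri_var -> R) :
  (forall v, 0 <= theta v) ->
  (forall r, \sum_j sri_matrix r j * z j <= sri_rhs x theta r) ->
  SRIhat d p C w b x theta (fun xi v => z (xi, v)).
Proof.
move=> theta_ge0 z_sol; split=> // [xi v|xi S S_nz|v].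
- have := z_sol (inl (inl (xi, v))); have := z_sol (inl (inr (xi, v))).
  by rewrite !sum_sri_matrix /=; lra.
- by have := z_sol (inr (inl (xi, S))); rewrite sum_sri_matrix /= S_nz; lra.
- by have := z_sol (inr (inr v)); rewrite sum_sri_matrix.
Qed.

Definition cert_alpha (l : sri_row -> R) xi S : R := l (inr (inl (xi, S))).

Definition cert_beta (l : sri_row -> R) xi v : R := - l (inl (inr (xi, v))).

Lemma sum_sri_column (l : sri_row -> R) xi v :
  \sum_r l r * sri_matrix r (xi, v) =
  l (inr (inr v)) * pw xi v - l (inl (inl (xi, v)))
  - dual_load (cert_alpha l) (cert_beta l) xi v.
Proof.
have kron (F : sri_var -> R) : \sum_k F k * ((xi, v) == k)%:R = F (xi, v).
  by under eq_bigr => k _ do rewrite mulrC eq_sym; rewrite sum_kronecker.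
have cover : \sum_q l (inr (inl q)) * sri_matrix (inr (inl q)) (xi, v) =
    - \sum_(S : {set 'I_n} | v \in S) cert_alpha l xi S.
  rewrite sum_pair (bigD1 xi) //= [X in _ + X]big1 => [|xi' /negbTE xi'_neq].
    rewrite addr0 -sumrN [RHS]big_mkcond /=; apply: eq_bigr => S _.
    by rewrite eqxx; case: (v \in S); rewrite ?mulrN1 ?oppr0 ?mulr0.
  by apply: big1 => S _; rewrite eq_sym xi'_neq mulr0n oppr0 mulr0.
have budget : \sum_v' l (inr (inr v')) * sri_matrix (inr (inr v')) (xi, v) =
    l (inr (inr v)) * pw xi v.
  by under eq_bigr => v' _ do rewrite /= mulrCA eq_sym; rewrite sum_kronecker.
rewrite !big_sumType /= cover budget.
under eq_bigr => k _ do rewrite mulrN.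
rewrite sumrN !kron /dual_load /cert_beta.
by rewrite addrC; ring.
Qed.

Section Certificate.
Context {l : sri_row -> R}.
Hypothesis l_ge0 : forall r, 0 <= l r.
Hypothesis l_annihilates : forall j, \sum_r l r * sri_matrix r j = 0.

Lemma cert_dual_load_le xi v :
  dual_load (cert_alpha l) (cert_beta l) xi v <= l (inr (inr v)) * pw xi v.
Proof.
have := l_annihilates (xi, v); rewrite sum_sri_column.
by have := l_ge0 (inl (inl (xi, v))); lra.
Qed.

Lemma cert_Aset : Aset w (cert_alpha l) (cert_beta l).
Proof.
split=> [xi S _|xi v|xi v w0]; first exact: l_ge0.
  by rewrite oppr_le0.
by have := cert_dual_load_le xi v; rewrite w0 rmorph0 !mulr0.
Qed.

Lemma phi_cert_le v :
  0 < w v -> phi p w (cert_alpha l) (cert_beta l) v <= l (inr (inr v)).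
Proof. by move=> w_gt0; apply: phi_le => // xi; apply: cert_dual_load_le. Qed.

End Certificate.

Lemma sum_sri_rhs (l : sri_row -> R) x theta :
  \sum_r l r * sri_rhs x theta r =
  \sum_v l (inr (inr v)) * theta v
  - (\sum_xi \sum_(S : {set 'I_n} | S != set0) cert_alpha l xi S * xE x S
     + nu d C b (cert_alpha l) (cert_beta l)).
Proof.
rewrite !big_sumType /= big1 ?add0r => [|k _]; last exact: mulr0.
rewrite /nu !sum_pair /=.
set X := \sum_xi \sum_(S | S != set0) cert_alpha l xi S * xE x S.
set K := \sum_xi \sum_(S | S != set0) cert_alpha l xi S * (_ - _).
set B := \sum_xi \sum_v cert_beta l xi v * _.
have -> : \sum_xi \sum_v l (inl (inr (xi, v))) * (b v)%:R = - B.
  rewrite -sumrN; apply: eq_bigr => xi _; rewrite -sumrN; apply: eq_bigr => v _.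
  by rewrite /cert_beta mulNr opprK.
have -> : \sum_xi \sum_S
    l (inr (inl (xi, S))) * sri_rhs x theta (inr (inl (xi, S))) = - X - K.
  rewrite -!sumrN -big_split /=; apply: eq_bigr => xi _.
  rewrite -!sumrN -big_split /= [RHS]big_mkcond; apply: eq_bigr => S _ /=.
  by case: (S != set0); rewrite /cert_alpha ?mulr0 //; ring.
ring.
Qed.

Lemma ineq_no_infeasibility_certificate x theta :
  (forall v, 0 <= theta v) ->
  (forall alpha beta, Aset w alpha beta -> ineq d p C w b x theta alpha beta) ->
  no_infeasibility_certificate sri_matrix (sri_rhs x theta).
Proof.
move=> theta_ge0 valid l l_ge0 lA.
rewrite sum_sri_rhs subr_ge0.
apply: (le_trans (valid _ _ (cert_Aset l_ge0 lA))).
rewrite [X in _ <= X](bigID (fun v => 0 < w v)) /= -[X in X <= _]addr0.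
apply: lerD; last by apply: sumr_ge0 => v _; rewrite mulr_ge0.
by apply: ler_sum => v w_gt0; rewrite ler_wpM2r ?phi_cert_le.
Qed.

Lemma projSRI_iff x theta :
  projSRI d p C w b x theta <->
  (forall v, 0 <= theta v) /\
  (forall alpha beta, Aset w alpha beta -> ineq d p C w b x theta alpha beta).
Proof.
split=> [[y sri]|[theta_ge0 valid]].
  have [theta_ge0 _ _ _] := sri.
  by split=> // alpha beta; apply: SRIhat_ineq sri.
have /farkas[z z_sol] :
    no_infeasibility_certificate sri_matrix (sri_rhs x theta).
  exact: ineq_no_infeasibility_certificate.
by exists (fun xi v => z (xi, v)); apply: SRIhat_of_feasible.
Qed.

End SRIProjection.

Theorem proposition3 (R : realType) (n N : nat)
  (d : 'I_N -> 'I_n -> rat) (p : 'I_N -> rat) (C : rat)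
  (w : 'I_n -> rat) (b : 'I_n -> nat) (cvrp : option nat) :
  0 < C ->
  (forall xi v, 0 <= d xi v <= C) ->
  (forall xi, 0 < p xi) ->
  \sum_(xi < N) p xi = 1 ->
  (forall v, 0 <= w v) ->
  (forall xbar : edge n -> R, Xset d p C cvrp xbar ->
     forall theta : 'I_n -> R,
       projSRI d p C w b xbar theta <->
       ((forall v, 0 <= theta v) /\
        forall alpha beta, Aset w alpha beta ->
          ineq d p C w b xbar theta alpha beta))
  /\
  (forall (x : edge n -> R) (theta : 'I_n -> R),
     Pset d p C w b cvrp x theta <->
     [/\ Xset d p C cvrp x, (forall v, 0 <= theta v) &
         forall alpha beta, Aset w alpha beta ->
           ineq d p C w b x theta alpha beta]).
Proof.
move=> _ _ p_gt0 _ w_ge0.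
have sri_iff (x : edge n -> R) theta :
    projSRI d p C w b x theta <->
    (forall v, 0 <= theta v) /\
    (forall alpha beta, Aset w alpha beta -> ineq d p C w b x theta alpha beta).
  exact: projSRI_iff.
split=> [xbar _ theta|x theta]; first exact: sri_iff.
split=> [[x_X /sri_iff[theta_ge0 valid]]|[x_X theta_ge0 valid]]; first by split.
by split=> //; apply/sri_iff.
Qed.
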